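(* Let $X,Y,Z$ be finite random variables forming a Markov chain $X \leftrightarrow Y \leftrightarrow Z$. For $x\in\mathcal X$ let $[x]_{X,Y}$ and $[x]_{X,Z}$ denote the equivalence classes of $x$ under $p_{X,Y}$ and under $p_{X,Z}$, respectively. Then for every $x\in\mathcal X$ such that $p_{X,Z}(x,z)>0$ for some $z\in\mathcal Z$, we have $[x]_{X,Y}\subseteq [x]_{X,Z}$.
   Context: For finite random variables $X,Y$ with (w.l.o.g. disjoint) alphabets $\mathcal X,\mathcal Y$, the bipartite representation $\mathcal B_{X,Y}$ is the bipartite graph with vertex set $\mathcal X\cup\mathcal Y$ and an edge between $x\in\mathcal X$ and $y\in\mathcal Y$ iff $p(X=x)>0$ and $P(Y=y\mid X=x)>0$. The equivalence class $[x]_{X,Y}$ of $x\in\mathcal X$ is the set of $x'\in\mathcal X$ such that there is a path between $x$ and $x'$ in $\mathcal B_{X,Y}$. The classes $[x]_{X,Z}$ are defined analogously from $\mathcal B_{X,Z}$. *)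

(* Finite random variables X, Y, Z are given by their joint pmf
   P on the finite alphabets TX * TY * TZ (nonnegative, summing to 1). *)
From HB Require Import structures.
From mathcomp Require Import all_boot all_order all_algebra.
Set Implicit Arguments. Unset Strict Implicit. Unset Printing Implicit Defensive.
Import Order.TTheory GRing.Theory Num.Theory.
Local Open Scope ring_scope.

Section Defs.
Variables (R : realFieldType) (TX TY TZ : finType).

Definition is_pmf (P : {ffun TX * TY * TZ -> R}) : Prop :=
  (forall u, 0 <= P u) /\ \sum_u P u = 1.

Definition pX (P : {ffun TX * TY * TZ -> R}) (x : TX) : R :=
  \sum_(y : TY) \sum_(z : TZ) P (x, y, z).
Definition pY (P : {ffun TX * TY * TZ -> R}) (y : TY) : R :=
  \sum_(x : TX) \sum_(z : TZ) P (x, y, z).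
Definition pXY (P : {ffun TX * TY * TZ -> R}) (x : TX) (y : TY) : R :=
  \sum_(z : TZ) P (x, y, z).
Definition pXZ (P : {ffun TX * TY * TZ -> R}) (x : TX) (z : TZ) : R :=
  \sum_(y : TY) P (x, y, z).
Definition pYZ (P : {ffun TX * TY * TZ -> R}) (y : TY) (z : TZ) : R :=
  \sum_(x : TX) P (x, y, z).

(* X <-> Y <-> Z is a Markov chain: X and Z are conditionally independent
   given Y, i.e. p(x,y,z) p(y) = p(x,y) p(y,z) for all x, y, z. *)
Definition markov_chain (P : {ffun TX * TY * TZ -> R}) : Prop :=
  forall x y z, P (x, y, z) * pY P y = pXY P x y * pYZ P y z.
End Defs.

(* Bipartite representation B_{A,B} of a pair of random variables (A,B) with
   marginal pA and joint pAB: vertex set A + B (disjoint union), edge between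
   a and b iff p(A=a) > 0 and P(B=b | A=a) = pAB a b / pA a > 0.
   The relation is made symmetric (undirected graph). *)
Definition bip_edge (R : realFieldType) (TA TB : finType)
    (pA : TA -> R) (pAB : TA -> TB -> R) : rel (TA + TB) :=
  fun u v =>
    match u, v with
    | inl a, inr b => (0 < pA a) && (0 < pAB a b / pA a)
    | inr b, inl a => (0 < pA a) && (0 < pAB a b / pA a)
    | _, _ => false
    end.

Definition eq_class (R : realFieldType) (TA TB : finType)
    (pA : TA -> R) (pAB : TA -> TB -> R) (a : TA) : {set TA} :=
  [set a' | connect (bip_edge pA pAB) (inl a) (inl a')].

(** A path in the bipartite graph of (X, Y) alternates between X-symbols and
    Y-symbols, so it suffices that two X-symbols x1, x2 sharing a Y-neighbour y
    are joined in the graph of (X, Z).  Since p(y) > 0, some z has p(y, z) > 0,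
    and the Markov identity p(x, y, z) p(y) = p(x, y) p(y, z) makes p(x, y, z),
    hence p(x, z), positive for every X-neighbour x of y: thus x1 - z - x2 is a
    path of the (X, Z)-graph. *)
From mathcomp Require Import all_boot all_order all_algebra.
Set Implicit Arguments. Unset Strict Implicit. Unset Printing Implicit Defensive.
Import Order.TTheory GRing.Theory Num.Theory.
Local Open Scope ring_scope.

Section BipartiteEdges.
Variables (R : realFieldType) (TA TB : finType).
Variables (pA : TA -> R) (pAB : TA -> TB -> R).

Lemma bip_edge_sym : symmetric (bip_edge pA pAB).
Proof. by case=> [a|b] [a'|b']. Qed.

Hypothesis pAB_le_pA : forall a b, pAB a b <= pA a.

Lemma bip_edgeE a b : bip_edge pA pAB (inl a) (inr b) = (0 < pAB a b).
Proof.
apply/andP/idP => [[pA_gt0]|pAB_gt0]; first by rewrite pmulr_lgt0 ?invr_gt0.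
have pA_gt0 : 0 < pA a by apply: lt_le_trans pAB_gt0 (pAB_le_pA a b).
by rewrite pA_gt0 divr_gt0.
Qed.

End BipartiteEdges.

Lemma connect_bipartite_inl (TA TB : finType) (e : rel (TA + TB)) (r : rel TA) :
    reflexive r -> transitive r ->
    (forall a1 a2, ~~ e (inl a1) (inl a2)) ->
    (forall b1 b2, ~~ e (inr b1) (inr b2)) ->
    (forall a1 a2 b, e (inl a1) (inr b) -> e (inr b) (inl a2) -> r a1 a2) ->
  forall a a', connect e (inl a) (inl a') -> r a a'.
Proof.
move=> r_refl r_trans no_ll no_rr link a a' /connectP[p].
pose inv u := if u is inl a1 then r a a1
              else [exists a1, r a a1 && e (inl a1) u].
have inv_step u v : inv u -> e u v -> inv v.
  case: u v => [a1|b] [a2|b'] /=.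
  - by rewrite (negbTE (no_ll _ _)).
  - by move=> ra1 e1; apply/existsP; exists a1; rewrite ra1.
  - by case/existsP=> a1 /andP[ra1 e1] e2; apply: r_trans ra1 (link _ _ _ e1 e2).
  - by rewrite (negbTE (no_rr _ _)).
have inv_path u q : inv u -> path e u q -> inv (last u q).
  by elim: q u => [|v q IHq] u //= inv_u /andP[euv /IHq]; apply; apply: inv_step euv.
move=> ep a'_last; have := inv_path _ _ (r_refl a : inv (inl a)) ep.
by rewrite -a'_last.
Qed.

Section Marginals.
Variables (R : realFieldType) (TX TY TZ : finType).
Variable P : {ffun TX * TY * TZ -> R}.
Hypothesis P_ge0 : forall u, 0 <= P u.

Lemma pXY_ge0 x y : 0 <= pXY P x y.
Proof. exact: sumr_ge0. Qed.

Lemma pXZ_ge0 x z : 0 <= pXZ P x z.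
Proof. exact: sumr_ge0. Qed.

Lemma pYZ_ge0 y z : 0 <= pYZ P y z.
Proof. exact: sumr_ge0. Qed.

Lemma pXY_le_pX x y : pXY P x y <= pX P x.
Proof. by rewrite /pX (bigD1 y) //= lerDl sumr_ge0 // => y' _; apply: pXY_ge0. Qed.

Lemma pXZ_le_pX x z : pXZ P x z <= pX P x.
Proof.
by rewrite /pX exchange_big (bigD1 z) //= lerDl sumr_ge0 // => z' _; apply: pXZ_ge0.
Qed.

Lemma pXY_le_pY x y : pXY P x y <= pY P y.
Proof. by rewrite /pY (bigD1 x) //= lerDl sumr_ge0 // => x' _; apply: pXY_ge0. Qed.

Lemma P_le_pXZ x y z : P (x, y, z) <= pXZ P x z.
Proof. by rewrite /pXZ (bigD1 y) //= lerDl sumr_ge0. Qed.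

Lemma pY_sum_pYZ y : pY P y = \sum_z pYZ P y z.
Proof. exact: exchange_big. Qed.

Hypothesis markov : markov_chain P.

Lemma markov_pXZ_gt0 x y z : 0 < pXY P x y -> 0 < pYZ P y z -> 0 < pXZ P x z.
Proof.
move=> pXY_gt0 pYZ_gt0.
have pY_gt0 : 0 < pY P y by apply: lt_le_trans pXY_gt0 (pXY_le_pY x y).
have : 0 < P (x, y, z) * pY P y by rewrite markov mulr_gt0.
by rewrite pmulr_lgt0 // => /lt_le_trans; apply; apply: P_le_pXZ.
Qed.

Lemma markov_common_pXZ x1 x2 y :
  0 < pXY P x1 y -> 0 < pXY P x2 y ->
  exists z, 0 < pXZ P x1 z /\ 0 < pXZ P x2 z.
Proof.
move=> pXY1_gt0 pXY2_gt0.
have pY_gt0 : 0 < pY P y by apply: lt_le_trans pXY1_gt0 (pXY_le_pY x1 y).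
have [z /andP[_ pYZ_gt0]] : exists z, predT z && (0 < pYZ P y z).
  apply: psumr_neq0P => [z _|]; first exact: pYZ_ge0.
  by apply/eqP; rewrite -pY_sum_pYZ gt_eqF.
by exists z; split; apply: markov_pXZ_gt0 pYZ_gt0.
Qed.

End Marginals.

Theorem lemma2 (R : realFieldType) (TX TY TZ : finType)
    (P : {ffun TX * TY * TZ -> R}) :
  is_pmf P -> markov_chain P ->
  forall x : TX, (exists z : TZ, 0 < pXZ P x z) ->
    eq_class (pX P) (pXY P) x \subset eq_class (pX P) (pXZ P) x.
Proof.
move=> [P_ge0 _] markov x _.
have edgeXY := bip_edgeE (pXY_le_pX P_ge0).
have edgeXZ := bip_edgeE (pXZ_le_pX P_ge0).
pose linkedXZ a1 a2 := connect (bip_edge (pX P) (pXZ P)) (inl a1) (inl a2).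
apply/subsetP => a; rewrite !inE.
apply: (connect_bipartite_inl (r := linkedXZ)) => //.
- by move=> a1; apply: connect0.
- by move=> ? ? ?; apply: connect_trans.
move=> a1 a2 y; rewrite (bip_edge_sym _ _ (inr y)) !edgeXY => pXY1_gt0 pXY2_gt0.
have [z [pXZ1_gt0 pXZ2_gt0]] := markov_common_pXZ P_ge0 markov pXY1_gt0 pXY2_gt0.
apply: (connect_trans (y := inr z)); apply: connect1; first by rewrite edgeXZ.
by rewrite bip_edge_sym edgeXZ.
Qed.
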